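(* Let $\omega$ be a nonempty word in $\mathcal{B}$, let $n\ge1$, and let $\pi\in X_n(\omega)$ have $\omega$-decomposition $(\alpha,\omega,\gamma,\delta)$. If $\delta\notin\mathcal{B}$, then $\gamma_{-1}>\delta_1$ and $h(\omega)\ne 1$.
   Context: For a word $w=w_1\cdots w_k$ of pairwise distinct positive integers, an ascent is an index $t$ with $w_t<w_{t+1}$, a descent one with $w_t>w_{t+1}$, and the height is $h(w)=(\#\text{ascents})-(\#\text{descents})$ ($h(w)=0$ if $k\le1$). The word is ballot if every prefix has nonnegative height. $\mathcal{B}$ denotes the set of all finite ballot words of pairwise distinct positive integers (including the empty word). A ballot permutation of $[n]$ is a permutation $\pi_1\cdots\pi_n$ in one-line notation that is a ballot word. For a word $w$, $w_1$ is its first letter, $w_{-1}$ its last letter, and $w'=w_k\cdots w_1$ its reversal. For a nonempty $\omega\in\mathcal{B}$, $X_n(\omega)$ is the set of ballot permutations $\pi$ of $[n]$ that can be written as a concatenation $\pi=\alpha\omega\gamma\delta$ (with $\alpha,\gamma,\delta$ possibly empty) such that $h(\alpha\omega\gamma)=h(\omega)$. For $\pi\in X_n(\omega)$, its $\omega$-decomposition is the (unique) 4-tuple $(\alpha,\omega,\gamma,\delta)$ with $\pi=\alpha\omega\gamma\delta$, $h(\alpha\omega\gamma)=h(\omega)$ and $\gamma'\omega_{-1}\in\mathcal{B}$, where $\gamma$ is of maximal length among all words with these properties. If $\gamma$ is empty, one sets $\gamma_{-1}=\omega_{-1}$. *)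

From mathcomp Require Import all_boot all_order all_algebra.
Set Implicit Arguments. Unset Strict Implicit. Unset Printing Implicit Defensive.
Import Order.TTheory GRing.Theory Num.Theory.

(* Words are [seq nat]; letters are meant to be pairwise distinct positive integers. *)

Definition step (p : nat * nat) : int :=
  ((p.1 < p.2)%N%:Z - (p.2 < p.1)%N%:Z)%R.

Definition height (w : seq nat) : int :=
  (\sum_(p <- zip w (behead w)) step p)%R.

Definition ballot (w : seq nat) : bool :=
  all (fun i => (0 <= height (take i w))%R) (iota 0 (size w).+1).

Definition inB (w : seq nat) : bool :=
  [&& uniq w, all (fun x => 0 < x)%N w & ballot w].

Definition ballot_perm (n : nat) (pi : seq nat) : bool :=
  perm_eq pi (iota 1 n) && ballot pi.

Definition in_X (n : nat) (omega pi : seq nat) : Prop :=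
  ballot_perm n pi /\
  exists alpha gamma delta,
    pi = alpha ++ omega ++ gamma ++ delta /\
    height (alpha ++ omega ++ gamma) = height omega.

(* w_{-1}: last letter (default 0 for the empty word, never used on empty words) *)
Definition lastl (w : seq nat) : nat := last 0 w.

Definition decomp_cond (pi omega alpha gamma delta : seq nat) : Prop :=
  pi = alpha ++ omega ++ gamma ++ delta /\
  height (alpha ++ omega ++ gamma) = height omega /\
  inB (rev gamma ++ [:: lastl omega]).

Definition omega_decomp (pi omega alpha gamma delta : seq nat) : Prop :=
  decomp_cond pi omega alpha gamma delta /\
  forall alpha2 gamma2 delta2,
    decomp_cond pi omega alpha2 gamma2 delta2 -> (size gamma2 <= size gamma)%N.

From mathcomp Require Import all_boot all_order all_algebra zify.
Import Order.TTheory GRing.Theory Num.Theory.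
Set Implicit Arguments. Unset Strict Implicit. Unset Printing Implicit Defensive.

(* Let D = δ_1 ⋯ δ_j be the shortest prefix of δ of negative height: h(D) = -1
   and every proper prefix of D has nonnegative height, so every suffix of D has
   nonpositive height, i.e. the reversal of D is ballot.  If γ_{-1} < δ_1, the
   ascent at the junction cancels h(D) = -1, so (α, ω, γD, δ_{j+1} ⋯) is again a
   decomposition with a longer γ, contradicting maximality.  Hence γ_{-1} > δ_1,
   and the prefix αωγD of the ballot permutation π has height h(ω) - 2 >= 0. *)

Section Height.
Local Open Scope ring_scope.

Lemma step_asc a b : (a < b)%N -> step (a, b) = 1.
Proof. by move=> ab; rewrite /step /= ab ltnNge ltnW. Qed.

Lemma step_desc a b : (b < a)%N -> step (a, b) = -1.
Proof. by move=> ba; rewrite /step /= ba ltnNge ltnW. Qed.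

Lemma step_ge a b : -1 <= step (a, b).
Proof. by rewrite /step; case: (_ < _)%N; case: (_ < _)%N. Qed.

Lemma step_swap a b : step (b, a) = - step (a, b).
Proof. by rewrite /step /= opprB. Qed.

Lemma height_nil : height [::] = 0.
Proof. by rewrite /height big_nil. Qed.

Lemma height_seq1 a : height [:: a] = 0.
Proof. by rewrite /height big_nil. Qed.

Lemma height_cons2 a b s : height [:: a, b & s] = step (a, b) + height (b :: s).
Proof. by rewrite /height big_cons. Qed.

Lemma height_cons_cat x s t :
  height (x :: s ++ t) = height (x :: s) + height (last x s :: t).
Proof.
elim: s x => [|y s IH] x /=; first by rewrite height_seq1 add0r.
by rewrite !height_cons2 IH addrA.
Qed.

Lemma height_cat_cons s y t : s != [::] ->
  height (s ++ y :: t) = height s + step (last 0 s, y) + height (y :: t).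
Proof. by case: s => // x s _; rewrite height_cons_cat height_cons2 addrA. Qed.

Lemma height_rcons2 s a b :
  height (rcons (rcons s a) b) = height (rcons s a) + step (a, b).
Proof.
case: s => [|x s]; first by rewrite /= height_cons2 !height_seq1 addr0 add0r.
by rewrite -cats1 height_cons_cat last_rcons height_cons2 height_seq1 addr0.
Qed.

Lemma height_rev s : height (rev s) = - height s.
Proof.
elim: s => [|a [|b s] IH]; rewrite ?height_nil ?height_seq1 ?oppr0 //.
by rewrite !rev_cons height_rcons2 -rev_cons IH height_cons2 step_swap [RHS]opprD addrC.
Qed.

Lemma height_cons_ge z t : height t - 1 <= height (z :: t).
Proof.
case: t => [|y t]; first by rewrite height_nil height_seq1.
by rewrite height_cons2 addrC lerD2r step_ge.
Qed.

Lemma height_cat_ge s t : height s + height t - 1 <= height (s ++ t).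
Proof.
case: s => [|x s]; first by rewrite height_nil add0r gerBl.
by rewrite height_cons_cat -addrA lerD2l height_cons_ge.
Qed.

End Height.

Section Ballot.
Local Open Scope ring_scope.

Lemma ballotP w : reflect (forall i, 0 <= height (take i w)) (ballot w).
Proof.
apply: (iffP allP) => [bal_w i|bal_w i _]; last exact: bal_w.
have [le_i|lt_i] := leqP i (size w); first by apply: bal_w; rewrite mem_iota ltnS.
rewrite take_oversize ?(ltnW lt_i) // -{1}(take_size w).
by apply: bal_w; rewrite mem_iota ltnS leqnn.
Qed.

Lemma ballot_height_prefix s t : ballot (s ++ t) -> 0 <= height s.
Proof. by move/ballotP/(_ (size s)); rewrite take_size_cat. Qed.

Lemma ballot_revP w : reflect (forall k, height (drop k w) <= 0) (ballot (rev w)).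
Proof.
apply: (iffP (ballotP _)) => bal_w k; last by rewrite take_rev height_rev oppr_ge0.
have [le_k|lt_k] := leqP k (size w); last by rewrite drop_oversize ?(ltnW lt_k) ?height_nil.
by have := bal_w (size w - k)%N; rewrite take_rev subKn // height_rev oppr_ge0.
Qed.

Lemma ballot_rev_cat x s y t :
  ballot (rev (x :: s)) -> ballot (rev (y :: t)) -> height [:: last x s, y & t] <= 0 ->
  ballot (rev (x :: s ++ y :: t)).
Proof.
move=> /ballot_revP bal_xs /ballot_revP bal_yt junction; apply/ballot_revP => k.
have [lt_k|le_k] := ltnP k (size (x :: s)); last first.
  by rewrite -cat_cons drop_cat ltnNge le_k /=.
rewrite -cat_cons drop_cat lt_k.
case E: (drop k (x :: s)) => [|e r]; first by move: lt_k; rewrite -subn_gt0 -size_drop E.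
have last_r : last e r = last x s.
  by rewrite -[last x s]/(last 0 (x :: s)) -(cat_take_drop k (x :: s)) E last_cat.
by rewrite height_cons_cat last_r -[0]addr0 lerD // -E bal_xs.
Qed.

Lemma ballot_rev_first_neg w :
  height w = -1 -> (forall i, (i < size w)%N -> 0 <= height (take i w)) ->
  ballot (rev w).
Proof.
move=> hw nonneg; apply/ballot_revP => k.
have [lt_k|le_k] := ltnP k (size w); last by rewrite drop_oversize ?height_nil.
have := height_cat_ge (take k w) (drop k w); have := nonneg k lt_k.
rewrite cat_take_drop hw; lia.
Qed.

Lemma not_ballot_first_neg w : ~~ ballot w ->
  exists D t, [/\ w = D ++ t, height D = -1
                & forall i, (i < size D)%N -> 0 <= height (take i D)].
Proof.
move=> nbal; have neg : exists j, height (take j w) < 0.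
  by have [j _] := allPn nbal; exists j; rewrite ltNge.
have [j neg_j min_j] := ex_minnP neg.
have nonneg i : (i < j)%N -> 0 <= height (take i w).
  by move=> lt_ij; rewrite leNgt; apply/negP => /min_j; rewrite leqNgt lt_ij.
exists (take j w), (drop j w); split; first by rewrite cat_take_drop.
- case: j neg_j {min_j} nonneg => [|j]; first by rewrite take0 height_nil.
  move=> neg_j /(_ j (ltnSn j)) nonneg_j.
  have := height_cat_ge (take j w) (take 1 (drop j w)).
  rewrite -takeD addn1.
  by case: (drop j w) => [|a r]; rewrite /= ?take0 ?height_nil ?height_seq1; lia.
- move=> i; rewrite size_take_min => /leq_trans/(_ (geq_minl _ _)) lt_ij.
  by rewrite take_takel ?nonneg // ltnW.
Qed.
End Ballot.

Lemma inB_subseq s w :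
  uniq s -> all (fun x => 0 < x)%N s -> subseq w s -> inB w = ballot w.
Proof.
move=> uniq_s /allP pos_s sub_w; rewrite /inB (subseq_uniq sub_w) //=.
suff -> : all (fun x => 0 < x)%N w by [].
by apply/allP => x /(mem_subseq sub_w)/pos_s.
Qed.

Lemma lastl_mem omega : omega != [::] -> lastl omega \in omega.
Proof. by case: omega => // x s _; exact: mem_last. Qed.

Lemma last_decomp alpha omega gamma : omega != [::] ->
  last 0 (alpha ++ omega ++ gamma) = last (lastl omega) gamma.
Proof. by case: omega => // x s _; rewrite !last_cat. Qed.

Lemma last_decomp_mem alpha omega gamma : omega != [::] ->
  last (lastl omega) gamma \in alpha ++ omega ++ gamma.
Proof.
move=> omega0; rewrite !mem_cat.
have := mem_last (lastl omega) gamma; rewrite in_cons => /orP[/eqP->|->].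
  by rewrite lastl_mem ?orbT.
by rewrite !orbT.
Qed.

Lemma height_decomp_cat alpha omega gamma d D : omega != [::] ->
  height (alpha ++ omega ++ gamma ++ d :: D) =
  (height (alpha ++ omega ++ gamma) + step (last (lastl omega) gamma, d) + height (d :: D))%R.
Proof.
move=> omega0; rewrite -(last_decomp alpha) // -height_cat_cons ?catA //.
by case: alpha => //; case: omega omega0.
Qed.

Lemma decomp_cond_extend pi omega alpha gamma d D t :
  uniq pi -> all (fun x => 0 < x)%N pi -> omega != [::] ->
  decomp_cond pi omega alpha gamma (d :: D ++ t) ->
  height (d :: D) = (-1)%R -> ballot (rev (d :: D)) ->
  (last (lastl omega) gamma < d)%N ->
  decomp_cond pi omega alpha (gamma ++ d :: D) t.
Proof.
move=> uniq_pi pos_pi omega0 [Epi [h_prefix inB_gamma]] hD bal_D /step_asc asc.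
have Epi' : pi = alpha ++ omega ++ (gamma ++ d :: D) ++ t by rewrite Epi -!catA.
split=> //; split; first by rewrite height_decomp_cat // h_prefix asc hD addrK.
rewrite cats1 -rev_cons (@inB_subseq (rev pi) _) ?subseq_rev ?rev_uniq ?all_rev //.
  move: inB_gamma; rewrite cats1 -rev_cons => /and3P[_ _ bal_gamma].
  by rewrite ballot_rev_cat // height_cons2 asc hD addrN.
rewrite Epi' catA -cat1s; apply: cat_subseq; last exact: prefix_subseq.
by rewrite sub1seq mem_cat lastl_mem ?orbT.
Qed.

Theorem lemma2p2 (omega : seq nat) (n : nat) (pi alpha gamma delta : seq nat) :
  omega != [::] -> inB omega -> (1 <= n)%N ->
  in_X n omega pi ->
  omega_decomp pi omega alpha gamma delta ->
  ~~ inB delta ->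
  (last (lastl omega) gamma > head 0 delta)%N /\ height omega != 1%R.
Proof.
move=> omega0 _ _ [/andP[perm_pi bal_pi] _] [decomp gamma_max] notB_delta.
have [Epi [h_prefix _]] := decomp.
have uniq_pi : uniq pi by rewrite (perm_uniq perm_pi) iota_uniq.
have pos_pi : all (fun x => 0 < x)%N pi.
  by apply/allP => x; rewrite (perm_mem perm_pi) mem_iota => /andP[].
have : ~~ ballot delta by rewrite -(inB_subseq uniq_pi pos_pi) // Epi !catA suffix_subseq.
case/not_ballot_first_neg => -[|d D] [t [Edelta hD nonneg]]; first by rewrite height_nil in hD.
rewrite {}Edelta /= in Epi decomp *.
have h_D_prefix := height_decomp_cat alpha gamma d D omega0.
have [lt_cd|lt_dc|eq_cd] := ltngtP (last (lastl omega) gamma) d.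
- have := gamma_max _ _ _ (decomp_cond_extend uniq_pi pos_pi omega0 decomp hD
                              (ballot_rev_first_neg hD nonneg) lt_cd).
  by rewrite size_cat /= addnS ltnNge leq_addr.
- split=> //; apply/eqP => h_omega.
  have : ballot ((alpha ++ omega ++ gamma ++ d :: D) ++ t) by rewrite -!catA -Epi.
  by move/ballot_height_prefix; rewrite h_D_prefix h_prefix h_omega step_desc // hD.
- have : uniq ((alpha ++ omega ++ gamma) ++ d :: D ++ t) by rewrite -!catA -Epi.
  rewrite cat_uniq => /and3P[_ /hasPn/(_ d (mem_head _ _))].
  by rewrite -eq_cd last_decomp_mem.
Qed.
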